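(* Let $p>1$ and $h\in C[0,\infty)$ with $h(s)>0$ for $s>0$, and assume \[ \lim_{t\to\infty} t^{-(p+1)/2}\int_0^t s^{p+1}h(s)\,ds=\infty. \] For $c>0$ define \[ E(c)=\inf_{w\in H^1_0(0,c),\,w\not\equiv0}\frac{\int_0^c|w'(s)|^2ds}{\left(\int_0^c h(s)|w(s)|^{p+1}ds\right)^{2/(p+1)}}. \] Then $E(c)\to0$ as $c\to\infty$. *)

From HB Require Import structures.
From mathcomp Require Import all_boot all_order all_algebra.
From mathcomp Require Import all_classical all_reals all_analysis.
Set Implicit Arguments. Unset Strict Implicit. Unset Printing Implicit Defensive.
Import Order.TTheory GRing.Theory Num.Theory.
Import numFieldNormedType.Exports.
Local Open Scope classical_set_scope.
Local Open Scope ring_scope.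

(* Elements of H^1_0(0,c) are represented through their (weak) derivative g:
   w(x) = \int_0^x g, with g in L^2(0,c) and \int_0^c g = 0 (so w(0)=w(c)=0). *)
Definition H10_prim (R : realType) (g : R -> R) (x : R) : R :=
  Rintegral (@lebesgue_measure R) `[0, x] g.

Definition is_H10_deriv (R : realType) (c : R) (g : R -> R) : Prop :=
  measurable_fun `[0, c] g /\
  (@lebesgue_measure R).-integrable `[0, c] (EFin \o g) /\
  (\int[@lebesgue_measure R]_(x in `[0%R, c]%classic) ((g x) ^+ 2)%:E < +oo)%E /\
  Rintegral (@lebesgue_measure R) `[0, c] g = 0.

Definition rayleigh (R : realType) (p : R) (h : R -> R) (c : R) (g : R -> R) : R :=
  Rintegral (@lebesgue_measure R) `[0, c] (fun s => (g s) ^+ 2) /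
  (Rintegral (@lebesgue_measure R) `[0, c]
     (fun s => h s * `|H10_prim g s| `^ (p + 1))) `^ (2 / (p + 1)).

Definition E_inf (R : realType) (p : R) (h : R -> R) (c : R) : R :=
  inf [set q : R | exists g : R -> R,
         [/\ is_H10_deriv c g,
             (exists x : R, 0 <= x <= c /\ H10_prim g x != 0)
           & q = rayleigh p h c g]].

(* The tent w(s) = c/2 - |s - c/2|, whose weak derivative is +-1, competes
   in E(c): its Dirichlet energy is c and, as w(s) = s on [0, c/2] and h > 0,
   its weighted L^(p+1) mass is at least I(c/2), where
   I(t) = \int_0^t s^(p+1) h(s) ds.  Hence 0 <= E(c) <= c / I(c/2)^(2/(p+1)),
   and the growth I(t) >> t^((p+1)/2) sends this bound to 0. *)

From HB Require Import structures.
From mathcomp Require Import all_boot all_order all_algebra.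
From mathcomp Require Import all_classical all_reals all_analysis.
From mathcomp Require Import measurable_realfun lra.
Set Implicit Arguments.
Unset Strict Implicit.
Unset Printing Implicit Defensive.
Import Order.TTheory GRing.Theory Num.Theory.
Import numFieldNormedType.Exports.
Local Open Scope classical_set_scope.
Local Open Scope ring_scope.

Section Rintegral_subset.
Context d (T : measurableType d) (R : realType).
Variable mu : {measure set T -> \bar R}.

Lemma ge0_subset_Rintegral (A B : set T) (f : T -> R) :
  measurable A -> measurable B -> A `<=` B ->
  mu.-integrable B (EFin \o f) -> (forall x, B x -> 0 <= f x) ->
  \int[mu]_(x in A) f x <= \int[mu]_(x in B) f x.
Proof.
move=> mA mB AB intBf f0; have intAf := integrableS mB mA AB intBf.
rewrite /Rintegral fine_le ?integrable_fin_num //.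
apply: ge0_subset_integral => //; first exact: measurable_int intBf.
Qed.

End Rintegral_subset.

Section Rintegral_itv.
Variable R : realType.
Notation mu := (@lebesgue_measure R).

Lemma Rintegral_itv_cst (b0 b1 : bool) (a b r : R) : a <= b ->
  \int[mu]_(x in [set` Interval (BSide b0 a) (BSide b1 b)]) r = r * (b - a).
Proof.
move=> ab; rewrite Rintegral_cst //= lebesgue_measure_itv /= lte_fin.
have [ltab|leba] := ltrP a b; first by rewrite -EFinD.
have -> : a = b by apply/le_anti; rewrite ab leba.
by rewrite subrr mulr0.
Qed.

End Rintegral_itv.

Section tent.
Variable R : realType.
Notation mu := (@lebesgue_measure R).

Definition tent (c s : R) : R := c / 2 - `|s - c / 2|.
Definition tent_slope (c s : R) : R := if s <= c / 2 then 1 else -1.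

Lemma tent_id (c s : R) : s <= c / 2 -> tent c s = s.
Proof. by move=> sc; rewrite /tent ler0_norm ?subr_le0 //; lra. Qed.

Lemma tent_le_half (c s : R) : tent c s <= c / 2.
Proof. by rewrite /tent gerBl. Qed.

Lemma tent_ge0 (c s : R) : 0 <= s <= c -> 0 <= tent c s.
Proof. by move=> /andP[s0 sc]; rewrite /tent subr_ge0 ler_norml; lra. Qed.

Lemma measurable_tent (c : R) : measurable_fun setT (tent c).
Proof.
apply: measurable_funB => //; apply: measurableT_comp => //.
exact: measurable_funB.
Qed.

Lemma tent_slope_sqr (c s : R) : tent_slope c s ^+ 2 = 1.
Proof. by rewrite /tent_slope; case: ifP; rewrite ?sqrrN expr1n. Qed.

Lemma measurable_tent_slope (c : R) : measurable_fun setT (tent_slope c).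
Proof. by apply: measurable_fun_ifT => //; exact: measurable_fun_ler. Qed.

Lemma integrable_tent_slope (c a b : R) :
  mu.-integrable `[a, b] (EFin \o tent_slope c).
Proof.
apply: measurable_bounded_integrable => //.
- have := lebesgue_measure_itv `[a, b]; rewrite /= => ->.
  by case: ifP; rewrite ?ltry.
- exact: measurable_funS (measurable_tent_slope c).
- rewrite /bounded_near; near=> M => s _.
  rewrite /= /tent_slope; case: ifP => _; rewrite ?normrN normr1.
  all: by near: M; exact: nbhs_pinfty_ge.
Unshelve. all: by end_near.
Qed.

Lemma H10_prim_tent_slope (c x : R) : 0 < c -> 0 <= x <= c ->
  H10_prim (tent_slope c) x = tent c x.
Proof.
move=> c0 /andP[x0 xc].
have prim_id y : 0 <= y <= c / 2 -> H10_prim (tent_slope c) y = y.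
  move=> /andP[y0 yc]; rewrite /H10_prim (@eq_Rintegral _ _ _ _ _ (fun=> 1)).
    by rewrite Rintegral_itv_cst // mul1r subr0.
  move=> s; rewrite inE /= in_itv /= => /andP[_ sy].
  by rewrite /tent_slope (le_trans sy yc).
have [xc2|c2x] := lerP x (c / 2); first by rewrite prim_id ?x0 // tent_id.
have c2 : 0 <= c / 2 by lra.
have := Rintegral_itvB (x := c / 2) (integrable_tent_slope c 0 x).
rewrite !bnd_simp => /(_ c2 (ltW c2x)).
rewrite -/(H10_prim _ x) -/(H10_prim _ (c / 2)) (prim_id (c / 2)) ?c2 ?lexx //.
rewrite (@eq_Rintegral _ _ _ _ _ (fun=> -1)) ?Rintegral_itv_cst ?(ltW c2x) //.
  by rewrite /tent gtr0_norm ?subr_gt0 //; lra.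
move=> s; rewrite inE /= in_itv /= => /andP[c2s _].
by rewrite /tent_slope leNgt c2s.
Qed.

Lemma is_H10_deriv_tent_slope (c : R) : 0 < c -> is_H10_deriv c (tent_slope c).
Proof.
move=> c0; split; [|split; [|split]].
- exact: measurable_funS (measurable_tent_slope c).
- exact: integrable_tent_slope.
- under eq_integral do rewrite tent_slope_sqr.
  rewrite integral_cst //= lebesgue_measure_itv.
  by case: ifP; rewrite ?mul1e ?ltry.
- rewrite -/(H10_prim _ c) H10_prim_tent_slope ?lexx ?(ltW c0) //.
  by rewrite /tent ger0_norm; lra.
Qed.

Lemma tent_slope_nontrivial (c : R) : 0 < c ->
  exists x, 0 <= x <= c /\ H10_prim (tent_slope c) x != 0.
Proof.
move=> c0; exists (c / 2).
have c2 : 0 <= c / 2 <= c by apply/andP; split; lra.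
by rewrite H10_prim_tent_slope ?tent_id //; split => //; lra.
Qed.

Lemma Rintegral_tent_slope_sqr (c : R) : 0 <= c ->
  \int[mu]_(s in `[0, c]) (tent_slope c s ^+ 2) = c.
Proof.
move=> c0; under eq_Rintegral do rewrite tent_slope_sqr.
by rewrite Rintegral_itv_cst // mul1r subr0.
Qed.

Lemma integrable_tent_weight (h : R -> R) (q c : R) : 0 <= q ->
  {within `[0, c], continuous h} ->
  mu.-integrable `[0, c] (EFin \o (fun s => h s * tent c s `^ q)).
Proof.
move=> q0 hc.
rewrite (_ : _ \o _ =
  ((EFin \o h) \* (EFin \o (fun s => (tent c s `^ q)%R)))%E); last first.
  by apply/funext => s; rewrite /= EFinM.
apply: integrableMl => //.
- exact: continuous_compact_integrable (@segment_compact R 0 c) hc.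
- have := measurableT_comp (measurable_powR q) (measurable_tent c).
  exact: measurable_funS.
- rewrite /bounded_near; near=> M => s; rewrite /= in_itv /= => s0c.
  rewrite ger0_norm ?powR_ge0 //; apply: (@le_trans _ _ ((c / 2) `^ q)).
    apply: ge0_ler_powR => //; rewrite ?nnegrE ?tent_ge0 ?tent_le_half //.
    by case/andP: s0c => s0 sc; lra.
  by near: M; apply: nbhs_pinfty_ge; exact: num_real.
Unshelve. all: by end_near.
Qed.

Lemma Rintegral_tent_weight_ge (h : R -> R) (q c : R) : 0 < c -> 0 < q ->
  {within `[0, c], continuous h} -> (forall s, 0 < s -> 0 < h s) ->
  \int[mu]_(s in `[0, c / 2]) (s `^ q * h s) <=
  \int[mu]_(s in `[0, c]) (h s * `|H10_prim (tent_slope c) s| `^ q).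
Proof.
move=> c0 q0 hc hpos.
have -> : \int[mu]_(s in `[0, c]) (h s * `|H10_prim (tent_slope c) s| `^ q) =
          \int[mu]_(s in `[0, c]) (h s * tent c s `^ q).
  apply: eq_Rintegral => s; rewrite inE /= in_itv /= => s0c.
  by rewrite H10_prim_tent_slope // ger0_norm ?tent_ge0.
have -> : \int[mu]_(s in `[0, c / 2]) (s `^ q * h s) =
          \int[mu]_(s in `[0, c / 2]) (h s * tent c s `^ q).
  apply: eq_Rintegral => s; rewrite inE /= in_itv /= => /andP[_ sc].
  by rewrite tent_id // mulrC.
apply: ge0_subset_Rintegral => //.
- by move=> s; rewrite /= !in_itv /= => /andP[-> sc]; lra.
- exact: integrable_tent_weight (ltW q0) hc.
move=> s; rewrite /= in_itv /= => /andP[s0 sc].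
(* [hpos] says nothing at [s = 0], but the tent vanishes there. *)
move: s0; rewrite le_eqVlt => /predU1P[<-|s0].
  by rewrite tent_id ?powR0 ?gt_eqF ?mulr0 //; lra.
by rewrite mulr_ge0 ?powR_ge0 ?ltW ?hpos.
Qed.

Lemma rayleigh_tent_slope_le (p : R) (h : R -> R) (c : R) :
  0 < c -> 0 < p + 1 ->
  {within `[0, c], continuous h} -> (forall s, 0 < s -> 0 < h s) ->
  0 < \int[mu]_(s in `[0, c / 2]) (s `^ (p + 1) * h s) ->
  rayleigh p h c (tent_slope c) <=
  c / (\int[mu]_(s in `[0, c / 2]) (s `^ (p + 1) * h s)) `^ (2 / (p + 1)).
Proof.
move=> c0 p1 hc hpos I0.
have den_ge := Rintegral_tent_weight_ge c0 p1 hc hpos.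
rewrite /rayleigh Rintegral_tent_slope_sqr ?(ltW c0) // ler_wpM2l ?(ltW c0) //.
rewrite lef_pV2 ?posrE ?powR_gt0 ?(lt_le_trans I0) //.
apply: ge0_ler_powR => //; rewrite ?nnegrE ?ltW ?divr_gt0 //.
exact: lt_le_trans I0 den_ge.
Qed.

End tent.

Lemma E_inf_ge0_le_rayleigh (R : realType) (p : R) (h : R -> R) (c : R)
    (g : R -> R) :
  is_H10_deriv c g -> (exists x, 0 <= x <= c /\ H10_prim g x != 0) ->
  0 <= E_inf p h c <= rayleigh p h c g.
Proof.
move=> g_H10 g_nz; rewrite /E_inf; set S := (X in inf X).
have Sg : S (rayleigh p h c g) by exists g.
have S_ge0 : lbound S 0.
  move=> _ [f [_ _ ->]]; rewrite /rayleigh divr_ge0 ?powR_ge0 //.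
  by apply: Rintegral_ge0 => s _; rewrite sqr_ge0.
apply/andP; split; first by apply: lb_le_inf => //; exists (rayleigh p h c g).
by apply: ge_inf Sg; exists 0.
Qed.

Section powRN_growth.
Variables (R : realType) (b : R) (I : R -> R).
Hypotheses (b_gt0 : 0 < b)
  (I_growth : (fun t => t `^ (- b) * I t) @ +oo --> +oo).

Lemma powRN_growth_gt0 : \forall t \near +oo, 0 < I t.
Proof.
near=> t.
have t0 : 0 < t by near: t; apply: nbhs_pinfty_gt; rewrite num_real.
have : 1 <= t `^ (- b) * I t by near: t; exact: (cvgryPge _).1 I_growth 1.
by move=> /(lt_le_trans ltr01); rewrite pmulr_rgt0 ?powR_gt0.
Unshelve. all: by end_near.
Qed.

Lemma powRN_growth_div_root_cvg0 : (fun t => t / I t `^ b^-1) @ +oo --> 0.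
Proof.
apply/cvgrPdist_lt => e e0.
have e2 : 0 < 2 / e by rewrite divr_gt0.
have eventually_ge := (cvgryPge _).1 I_growth ((2 / e) `^ b).
near=> t.
have t0 : 0 < t by near: t; apply: nbhs_pinfty_gt; rewrite num_real.
have growth : (2 / e) `^ b <= t `^ (- b) * I t by near: t; exact: eventually_ge.
have lower : 2 / e * t <= I t `^ b^-1.
  move: growth; rewrite powRN ler_pdivlMl; last exact: powR_gt0.
  rewrite mulrC -powRM ?(ltW e2) ?(ltW t0) // => growth.
  have -> : 2 / e * t = ((2 / e * t) `^ b) `^ b^-1.
    by rewrite -powRrM mulfV ?gt_eqF // powRr1 // mulr_ge0 ?ltW.
  have It0 : 0 <= I t := le_trans (powR_ge0 _ _) growth.
  by apply: ge0_ler_powR growth; rewrite ?nnegrE ?invr_ge0 ?powR_ge0 // ltW.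
have It_pos : 0 < I t `^ b^-1 by apply: lt_le_trans lower; rewrite mulr_gt0.
rewrite sub0r normrN ger0_norm ?divr_ge0 ?ltW // ltr_pdivrMr //.
apply: lt_le_trans (ler_wpM2l (ltW e0) lower).
by rewrite mulrA mulrCA divff ?gt_eqF // mulr1; lra.
Unshelve. all: by end_near.
Qed.

Lemma powRN_growth_div_root_half_cvg0 :
  (fun t => t / I (t / 2) `^ b^-1) @ +oo --> 0.
Proof.
have half_cvgy : (fun t : R => t / 2) @ +oo --> +oo.
  by apply/cvgryPge => M; exact: near_pinfty_div2 (nbhs_pinfty_ge (num_real M)).
have -> : (fun t => t / I (t / 2) `^ b^-1) =
          (fun t => 2 * (t / 2 / I (t / 2) `^ b^-1)).
  by apply/funext => t; rewrite mulrA mulrCA divff ?mulr1.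
rewrite -[X in _ --> X](mulr0 2).
exact: cvgMr (cvg_comp _ _ half_cvgy powRN_growth_div_root_cvg0).
Qed.

End powRN_growth.

Theorem lemma2p3 (R : realType) (p : R) (h : R -> R)
  (hp : 1 < p)
  (hcont : {within `[0, +oo[, continuous h})
  (hpos : forall s : R, 0 < s -> 0 < h s)
  (hlim : (fun t : R => t `^ (- ((p + 1) / 2)) *
             Rintegral (@lebesgue_measure R) `[0, t]
               (fun s => s `^ (p + 1) * h s)) @ +oo --> +oo) :
  E_inf p h @ +oo --> (0 : R).
Proof.
pose I t := \int[@lebesgue_measure R]_(s in `[0, t]) (s `^ (p + 1) * h s).
have p1 : 0 < p + 1 by lra.
have b0 : 0 < (p + 1) / 2 by lra.
have bound_cvg0 := powRN_growth_div_root_half_cvg0 b0 hlim.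
rewrite invf_div in bound_cvg0.
have I_gt0 := near_pinfty_div2 (powRN_growth_gt0 hlim).
apply: (squeeze_cvgr _ (cvg_cst 0) bound_cvg0); near=> c.
have c0 : 0 < c by near: c; apply: nbhs_pinfty_gt; rewrite num_real.
have I0 : 0 < I (c / 2) by near: c; exact: I_gt0.
have hc : {within `[0, c], continuous h}.
  apply: continuous_subspaceW hcont => s.
  by rewrite /= !in_itv /= => /andP[-> _].
have /andP[-> E_le] := E_inf_ge0_le_rayleigh p h
  (is_H10_deriv_tent_slope c0) (tent_slope_nontrivial c0).
exact: le_trans E_le (rayleigh_tent_slope_le c0 p1 hc hpos I0).
Unshelve. all: by end_near.
Qed.
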